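(* Let $\mathcal{H}$ be a projection-closed class of graphs. Then one of the following holds: (i) $\mathcal{H}$ contains $K_t$ for every $t\ge 1$; (ii) $\mathcal{H}$ contains $K_{t,t,t}$ for every $t\ge 1$; (iii) there is a $\mu\ge 0$ such that every $H\in\mathcal{H}$ has distance at most $\mu$ to extended bicliques.
   Context: A graph $H'$ is a projection of $H$ if $H'$ can be obtained from $H$ by a sequence of vertex deletions and identifications of two nonadjacent vertices; a class of graphs (closed under isomorphism) is projection-closed if it contains every projection of each of its members. $K_{t,t,t}$ is the complete tripartite graph with three parts of size $t$. An extended biclique is a complete bipartite graph together with a set of isolated vertices; the distance of $H$ to extended bicliques is the minimum number of vertices to delete from $H$ to obtain an extended biclique. *)

From mathcomp Require Import all_boot.
From Stdlib Require Relation_Operators.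
Set Implicit Arguments. Unset Strict Implicit. Unset Printing Implicit Defensive.

Record sgraph : Type := SGraph {
  vert : finType;
  adj : rel vert;
  adj_sym : symmetric adj;
  adj_irr : irreflexive adj }.
Arguments adj : clear implicits.

Definition graph_class := sgraph -> Prop.

Definition isomorphic (G G' : sgraph) : Prop :=
  exists f : vert G -> vert G', bijective f /\
    forall x y, adj G' (f x) (f y) = adj G x y.

Definition iso_closed (C : graph_class) : Prop :=
  forall G G', isomorphic G G' -> C G -> C G'.

(* G' is (isomorphic to) the graph obtained from G by deleting vertex v:
   f identifies the vertices of G' with the vertices of G other than v. *)
Definition deletion_step (G G' : sgraph) : Prop :=
  exists (v : vert G) (f : vert G' -> vert G),
    [/\ injective f, (forall x, f x != v), (forall y, y != v -> exists x, f x = y)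
      & forall x y, adj G' x y = adj G (f x) (f y)].

(* G' is (isomorphic to) the graph obtained from G by identifying two distinct
   nonadjacent vertices u and v: v is removed and u receives the union of the
   neighbourhoods of u and v. *)
Definition identification_step (G G' : sgraph) : Prop :=
  exists (u v : vert G) (f : vert G' -> vert G),
    [/\ u != v, ~~ adj G u v &
    [/\ injective f, (forall x, f x != v), (forall y, y != v -> exists x, f x = y)
      & forall x y, adj G' x y =
          [|| adj G (f x) (f y),
              (f x == u) && adj G v (f y)
            | (f y == u) && adj G (f x) v]]].

Definition projection_step (G G' : sgraph) : Prop :=
  deletion_step G G' \/ identification_step G G'.

Definition projection_of (H H' : sgraph) : Prop :=
  Relation_Operators.clos_refl_trans sgraph projection_step H H'.

Definition projection_closed (C : graph_class) : Prop :=
  iso_closed C /\ forall H H', C H -> projection_of H H' -> C H'.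

Definition Kadj (t : nat) : rel 'I_t := fun x y => x != y.
Lemma Kadj_sym t : symmetric (Kadj (t:=t)).
Proof. by move=> x y; rewrite /Kadj eq_sym. Qed.
Lemma Kadj_irr t : irreflexive (Kadj (t:=t)).
Proof. by move=> x; rewrite /Kadj eqxx. Qed.
Definition complete_graph (t : nat) : sgraph :=
  SGraph (@Kadj_sym t) (@Kadj_irr t).

Definition K3adj (t : nat) : rel ('I_3 * 'I_t) := fun x y => x.1 != y.1.
Lemma K3adj_sym t : symmetric (K3adj (t:=t)).
Proof. by move=> x y; rewrite /K3adj eq_sym. Qed.
Lemma K3adj_irr t : irreflexive (K3adj (t:=t)).
Proof. by move=> x; rewrite /K3adj eqxx. Qed.
Definition complete_tripartite (t : nat) : sgraph :=
  SGraph (@K3adj_sym t) (@K3adj_irr t).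

(* Distance of G to extended bicliques is at most mu: deleting a set S of at
   most mu vertices leaves a complete bipartite graph between (possibly empty)
   sides A, B plus isolated vertices (those outside S, A, B). *)
Definition dist_ext_biclique_le (G : sgraph) (mu : nat) : Prop :=
  exists S A B : {set vert G},
    [/\ #|S| <= mu, [disjoint S & A], [disjoint S & B], [disjoint A & B]
      & forall x y, x \notin S -> y \notin S ->
          adj G x y = ((x \in A) && (y \in B)) || ((x \in B) && (y \in A))].

(* A graph with no triangle, no induced P4 and no induced 2K2 is, as soon as it
   has four vertices, an extended biclique: the neighbourhoods of the two ends of
   any edge are its two sides. So in every graph of the class either at most 4k
   vertices meet all such four-vertex obstructions, and deleting them (and at most
   three more) leaves an extended biclique, or there are k disjoint obstructions.
   For k large, Ramsey's theorem applied to the 32 adjacencies between and inside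
   two obstructions yields many obstructions with a homogeneous pattern: [L]
   between any two of them and [F] inside each. Deleting vertices and identifying
   nonadjacent ones turns this family into K_t when [L] has a loop, is not
   symmetric or differs from [F], and otherwise into a blow-up of a triangle,
   that is K_{t,t,t}. *)

From mathcomp Require Import all_boot zify.
From Stdlib Require Import Classical.
From Stdlib Require Relation_Operators.
Set Implicit Arguments. Unset Strict Implicit. Unset Printing Implicit Defensive.

(* [psi] exhibits [G] as the graph obtained from the graph [A] on [P] by deleting
   the vertices sent to [None] and identifying the vertices with a common image. *)
Definition quotient_map (P : Type) (A : rel P) (G : sgraph)
    (psi : P -> option (vert G)) :=
  [/\ forall i, exists p, psi p = Some i,
      forall p q i j, psi p = Some i -> psi q = Some j -> A p q -> adj G i j
    & forall i j, adj G i j ->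
        exists p q, [/\ psi p = Some i, psi q = Some j & A p q]].
Arguments quotient_map {P} A G psi.

Lemma card_sig_neq (T : finType) (v : T) : #|{: {x | x != v}}|.+1 = #|T|.
Proof.
rewrite card_sig [in RHS](cardD1 v) inE; congr _.+1.
by apply: eq_card => x; rewrite !inE andbT.
Qed.

Lemma projection_closed_step (C : graph_class) (H H' : sgraph) :
  projection_closed C -> C H -> projection_step H H' -> C H'.
Proof. by move=> [_ closedC] CH step; apply: closedC CH _; apply: Relation_Operators.rt_step. Qed.

Section DeleteVertex.
Variables (H : sgraph) (v : vert H).

Definition delete_adj : rel {x : vert H | x != v} := fun x y => adj H (val x) (val y).

Lemma delete_adj_sym : symmetric delete_adj.
Proof. by move=> x y; rewrite /delete_adj adj_sym. Qed.

Lemma delete_adj_irr : irreflexive delete_adj.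
Proof. by move=> x; rewrite /delete_adj adj_irr. Qed.

Definition delete_vertex := SGraph delete_adj_sym delete_adj_irr.

Lemma delete_vertex_step : projection_step H delete_vertex.
Proof.
left; exists v, val; split=> //; first exact: val_inj.
- by move=> x; apply: (valP x).
- by move=> y yv; exists (exist _ y yv).
Qed.

End DeleteVertex.

Section IdentifyVertices.
Variables (H : sgraph) (u v : vert H).
Hypothesis (nadj_uv : ~~ adj H u v).

Definition identify_adj : rel {x : vert H | x != v} := fun x y =>
  [|| adj H (val x) (val y), (val x == u) && adj H v (val y)
    | (val y == u) && adj H (val x) v].

Lemma identify_adj_sym : symmetric identify_adj.
Proof.
move=> x y; rewrite /identify_adj (adj_sym (val x)) (adj_sym v (val x)) (adj_sym (val y) v).
by case: (adj H (val y) (val x)); case: (_ && _); case: (_ && _).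
Qed.

Lemma identify_adj_irr : irreflexive identify_adj.
Proof.
move=> x; rewrite /identify_adj adj_irr /=.
by case: eqP => [->|] //=; rewrite adj_sym (negbTE nadj_uv).
Qed.

Definition identify_vertices := SGraph identify_adj_sym identify_adj_irr.

Lemma identify_vertices_step : u != v -> projection_step H identify_vertices.
Proof.
move=> uv; right; exists u, v, val; split=> //; split=> //; first exact: val_inj.
- by move=> x; apply: (valP x).
- by move=> y yv; exists (exist _ y yv).
Qed.

End IdentifyVertices.

Section QuotientMap.
Variables (H G : sgraph) (phi : vert H -> option (vert G)).
Hypothesis phiQ : quotient_map (adj H) G phi.

Lemma quotient_map_delete v :
  phi v = None -> quotient_map (adj (delete_vertex v)) G (phi \o val).
Proof.
case: phiQ => phi_onto phi_adj phi_lift phi_v.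
have neq_v x i : phi x = Some i -> x != v.
  by move=> phi_x; apply/eqP => xv; move: phi_x; rewrite xv phi_v.
split=> [i | p q i j | i j /phi_lift [p [q [phi_p phi_q pq]]]].
- by have [x phi_x] := phi_onto i; exists (exist _ x (neq_v _ _ phi_x)).
- exact: phi_adj.
- by exists (exist _ p (neq_v _ _ phi_p)), (exist _ q (neq_v _ _ phi_q)).
Qed.

Lemma quotient_map_identify u v (uv : u != v) i :
  phi u = Some i -> phi v = Some i ->
  exists nadj_uv : ~~ adj H u v, quotient_map (adj (identify_vertices nadj_uv)) G (phi \o val).
Proof.
case: phiQ => phi_onto phi_adj phi_lift phi_u phi_v.
have nadj_uv : ~~ adj H u v.
  by apply/negP => /(phi_adj _ _ _ _ phi_u phi_v); rewrite adj_irr.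
exists nadj_uv; pose u' : vert (identify_vertices nadj_uv) := exist _ u uv.
split.
- move=> j; have [x phi_x] := phi_onto j; have [xv|x_v] := eqVneq x v.
    by exists u'; rewrite /= phi_u -phi_v -xv.
  by exists (exist _ x x_v).
- move=> [p p_v] [q q_v] j k /= phi_p phi_q.
  case/or3P=> [pq | /andP [/eqP pu vq] | /andP [/eqP qu pv]].
  + exact: phi_adj _ _ _ _ phi_p phi_q pq.
  + by apply: (phi_adj _ _ _ _ _ phi_q vq); rewrite phi_v -phi_u -pu.
  + by apply: (phi_adj _ _ _ _ phi_p _ pv); rewrite phi_v -phi_u -qu.
- move=> j k /phi_lift [p [q [phi_p phi_q pq]]].
  have [pv|p_v] := eqVneq p v.
    have q_v : q != v by apply: contraTneq pq => ->; rewrite pv adj_irr.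
    exists u', (exist _ q q_v); split=> //=; first by rewrite phi_u -phi_v -pv.
    by rewrite /identify_adj /= eqxx -pv pq orbT.
  have [qv|q_v] := eqVneq q v.
    exists (exist _ p p_v), u'; split=> //=; first by rewrite phi_u -phi_v -qv.
    by rewrite /identify_adj /= eqxx -qv pq !orbT.
  by exists (exist _ p p_v), (exist _ q q_v); rewrite /= /identify_adj /= pq.
Qed.

Lemma quotient_map_iso (i0 : vert G) :
  (forall x, phi x != None) -> injective phi -> isomorphic H G.
Proof.
case: phiQ => phi_onto phi_adj phi_lift phi_total phi_inj.
pose f x := odflt i0 (phi x).
have phi_f x : phi x = Some (f x) by rewrite /f; case: (phi x) (phi_total x).
have f_inj : injective f by move=> x y fxy; apply: phi_inj; rewrite !phi_f fxy.
have f_onto i : exists x, f x == i.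
  by have [x phi_x] := phi_onto i; exists x; move: phi_x; rewrite phi_f => -[->].
exists f; split.
  exists (fun i => xchoose (f_onto i)) => [x | i]; last exact/eqP/(xchooseP (f_onto i)).
  by apply: f_inj; apply/eqP/(xchooseP (f_onto (f x))).
move=> x y; apply/idP/idP => [/phi_lift [p [q [phi_p phi_q pq]]] | xy].
  have -> : x = p by apply: phi_inj; rewrite phi_p phi_f.
  by have -> : y = q by apply: phi_inj; rewrite phi_q phi_f.
exact: phi_adj _ _ _ _ (phi_f x) (phi_f y) xy.
Qed.

End QuotientMap.

Lemma projection_closed_quotient (C : graph_class) (G : sgraph) (i0 : vert G) :
  projection_closed C -> forall (H : sgraph) (phi : vert H -> option (vert G)),
  C H -> quotient_map (adj H) G phi -> C G.
Proof.
move=> closedC H; have [n] := ubnP #|vert H|.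
elim: n H => // n IH H /ltnSE sizeH phi CH phiQ.
have [v /eqP phi_v | phi_total] := pickP (fun v => phi v == None).
  apply: IH (quotient_map_delete phiQ phi_v).
  - by rewrite -ltnS card_sig_neq.
  - exact: projection_closed_step closedC CH (delete_vertex_step v).
have [[u v] /andP [/= uv /eqP phi_uv] | phi_inj] :=
  pickP (fun uv : vert H * vert H => (uv.1 != uv.2) && (phi uv.1 == phi uv.2)).
  case phi_u: (phi u) (phi_total u) phi_uv => [i|] // _ phi_v.
  have [nadj_uv idQ] := quotient_map_identify phiQ uv phi_u (esym phi_v).
  apply: IH idQ.
  - by rewrite -ltnS card_sig_neq.
  - exact: projection_closed_step closedC CH (identify_vertices_step nadj_uv uv).
apply: (proj1 closedC H G) CH; apply: quotient_map_iso phiQ i0 _ _ => [x | x y phi_xy].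
  by rewrite (negbT (phi_total x)).
by apply/eqP; move: (phi_inj (x, y)); rewrite /= phi_xy eqxx andbT => /negbFE.
Qed.

Lemma quotient_map_induced (Q : eqType) (B : rel Q) (P : finType) (v : P -> Q)
    (G : sgraph) (psi : P -> option (vert G)) : injective v ->
  quotient_map (fun p q => B (v p) (v q)) G psi ->
  quotient_map B G (fun x => if [pick p | v p == x] is Some p then psi p else None).
Proof.
move=> v_inj [psi_onto psi_adj psi_lift].
have pick_v p : (if [pick q | v q == v p] is Some q then psi q else None) = psi p.
  by case: pickP => [q /eqP /v_inj -> // | /(_ p)]; rewrite eqxx.
have pick_Some x i : (if [pick p | v p == x] is Some p then psi p else None) = Some i ->
    exists2 p, x = v p & psi p = Some i.
  by case: pickP => [p /eqP <- psi_p | //]; exists p.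
split=> [i | x y i j /pick_Some [p -> psi_p] /pick_Some [q -> psi_q] |
          i j /psi_lift [p [q [psi_p psi_q pq]]]].
- by have [p psi_p] := psi_onto i; exists (v p); rewrite pick_v.
- exact: psi_adj psi_p psi_q.
- by exists (v p), (v q); rewrite !pick_v.
Qed.

Lemma quotient_map_complete (P : Type) (A : rel P) t (psi : P -> option 'I_t) :
  (forall i, exists p, psi p = Some i) ->
  (forall p q i, psi p = Some i -> psi q = Some i -> ~~ A p q) ->
  (forall i j, i != j -> exists p q, [/\ psi p = Some i, psi q = Some j & A p q]) ->
  quotient_map A (complete_graph t) psi.
Proof.
move=> psi_onto psi_indep psi_edge; split=> // p q i j psi_p psi_q.
by apply: contraTneq => ij; apply: psi_indep psi_p _; rewrite psi_q ij.
Qed.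

Lemma quotient_map_tripartite (P : Type) (B : rel P) t (part : P -> option 'I_3) :
  quotient_map B (complete_graph 3) part ->
  quotient_map (fun x y : P * 'I_t => B x.1 y.1) (complete_tripartite t)
    (fun x => omap (fun a => (a, x.2)) (part x.1)).
Proof.
case=> part_onto part_adj part_lift; split.
- move=> [a i]; have [p part_p] := part_onto a.
  by exists (p, i); rewrite /= part_p.
- move=> [p i] [q j] [a i'] [b j'] /=.
  case part_p: (part p) => [a'|] // [<- _]; case part_q: (part q) => [b'|] // [<- _].
  exact: part_adj part_p part_q.
- move=> [a i] [b j] /part_lift [p [q [part_p part_q pq]]].
  by exists (p, i), (q, j); rewrite /= part_p part_q.
Qed.

Lemma eq_quotient_map (P : Type) (A A' : rel P) (G : sgraph) (psi : P -> option (vert G)) :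
  A =2 A' -> quotient_map A G psi -> quotient_map A' G psi.
Proof.
move=> eqA [psi_onto psi_adj psi_lift]; split=> // [p q i j | i j /psi_lift [p [q]]].
  by rewrite -eqA; apply: psi_adj.
by rewrite eqA; exists p, q.
Qed.

Definition quotient_mapb (P : eqType) (A : rel P) (G : sgraph) (psi : P -> option (vert G))
    (ps : seq P) (vs : seq (vert G)) :=
  [&& all (fun i => has (fun p => psi p == Some i) ps) vs,
      all (fun p => all (fun q => A p q ==>
         if psi p is Some i then if psi q is Some j then adj G i j else true else true) ps) ps
    & all (fun i => all (fun j => adj G i j ==>
         has (fun p => has (fun q => [&& psi p == Some i, psi q == Some j & A p q]) ps) ps) vs) vs].
Arguments quotient_mapb {P} A G psi ps vs.

Lemma quotient_mapbP (P : eqType) (A : rel P) (G : sgraph) (psi : P -> option (vert G))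
    (ps : seq P) (vs : seq (vert G)) :
  (forall p, p \in ps) -> (forall i, i \in vs) ->
  quotient_mapb A G psi ps vs -> quotient_map A G psi.
Proof.
move=> ps_all vs_all /and3P [/allP psi_onto /allP psi_adj /allP psi_lift]; split.
- by move=> i; have /hasP [p _ /eqP] := psi_onto i (vs_all i); exists p.
- move=> p q i j psi_p psi_q pq.
  by have /allP /(_ q (ps_all q)) /implyP /(_ pq) := psi_adj p (ps_all p); rewrite psi_p psi_q.
- move=> i j ij; have /allP /(_ j (vs_all j)) /implyP /(_ ij) := psi_lift i (vs_all i).
  by case/hasP=> p _ /hasP [q _ /and3P [/eqP psi_p /eqP psi_q pq]]; exists p, q.
Qed.

Section Ramsey.
Variable T : eqType.

Lemma ramsey_cons (c : rel T) x X Y :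
  subseq Y [seq y <- X | c x y] -> pairwise c Y ->
  subseq (x :: Y) (x :: X) /\ pairwise c (x :: Y).
Proof.
move=> sub_Y c_Y; split; first by rewrite /= eqxx (subseq_trans sub_Y) ?filter_subseq.
rewrite pairwise_cons c_Y andbT; apply/allP => y /(mem_subseq sub_Y).
by rewrite mem_filter => /andP [].
Qed.

Lemma subseq_filter_cons (P : pred T) x X Y :
  subseq Y [seq y <- X | P y] -> subseq Y (x :: X).
Proof. by move=> /subseq_trans; apply; rewrite (subseq_trans (filter_subseq _ _)) ?subseq_cons. Qed.

Lemma ramsey_two_colours (c : rel T) a b (X : seq T) : 2 ^ (a + b) <= size X ->
  exists2 Y, subseq Y X &
    (a <= size Y /\ pairwise c Y) \/ (b <= size Y /\ pairwise (fun x y => ~~ c x y) Y).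
Proof.
elim: a b X => [|a IHa] b X sizeX; first by exists [::]; [exact: sub0seq | left].
elim: b X sizeX => [|b IHb] X sizeX; first by exists [::]; [exact: sub0seq | right].
case: X sizeX => [|x X] /= sizeX; first by move: sizeX; rewrite leqNgt expn_gt0.
pose X1 := [seq y <- X | c x y]; pose X2 := [seq y <- X | ~~ c x y].
have size_X12 : size X1 + size X2 = size X by rewrite !size_filter count_predC.
have [big1 | big2] : 2 ^ (a + b.+1) <= size X1 \/ 2 ^ (a.+1 + b) <= size X2.
  have pos1 : 0 < 2 ^ (a + b.+1) by rewrite expn_gt0.
  have : 2 ^ (a.+1 + b) = 2 ^ (a + b.+1) by rewrite addSnnS.
  move: sizeX; rewrite addSn addnS !expnS; lia.
- have [Y sub_Y [[size_Y c_Y] | [size_Y c_Y]]] := IHa _ _ big1.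
    by have [] := ramsey_cons sub_Y c_Y; exists (x :: Y) => //; left.
  by exists Y; [exact: subseq_filter_cons sub_Y | right].
- have [Y sub_Y [[size_Y c_Y] | [size_Y c_Y]]] := IHb _ big2.
    by exists Y; [exact: subseq_filter_cons sub_Y | left].
  by have [] := ramsey_cons sub_Y c_Y; exists (x :: Y) => //; right.
Qed.

Fixpoint ramsey_bound (n m : nat) : nat :=
  if n is n'.+1 then 2 ^ (ramsey_bound n' m + ramsey_bound n' m) else m.

Lemma ramsey_colours (c : nat -> rel T) m n (X : seq T) : ramsey_bound n m <= size X ->
  exists2 Y, subseq Y X &
    m <= size Y /\ forall k, k < n -> exists b, pairwise (fun x y => c k x y == b) Y.
Proof.
elim: n X => [|n IH] X sizeX; first by exists X.
have [Y0 sub_Y0 [[size_Y0 c_Y0] | [size_Y0 c_Y0]]] := ramsey_two_colours (c n) sizeX;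
  have [Y sub_Y [size_Y c_Y]] := IH _ size_Y0;
  exists Y; rewrite ?(subseq_trans sub_Y sub_Y0) //; split=> // k;
  rewrite ltnS leq_eqVlt => /predU1P [-> | /c_Y //].
- by exists true; apply: subseq_pairwise sub_Y _; apply: sub_pairwise c_Y0 => x y ->.
- by exists false; apply: subseq_pairwise sub_Y _; apply: sub_pairwise c_Y0 => x y /negbTE ->.
Qed.

End Ramsey.

Lemma dist_ext_biclique_le_mono (H : sgraph) a b :
  a <= b -> dist_ext_biclique_le H a -> dist_ext_biclique_le H b.
Proof.
by move=> le_ab [S [A [B [size_S *]]]]; exists S, A, B; split; rewrite ?(leq_trans size_S).
Qed.

Definition o0 : 'I_4 := @Ordinal 4 0 isT.
Definition o1 : 'I_4 := @Ordinal 4 1 isT.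
Definition o2 : 'I_4 := @Ordinal 4 2 isT.
Definition o3 : 'I_4 := @Ordinal 4 3 isT.

Lemma ord4P (x : 'I_4) : [\/ x = o0, x = o1, x = o2 | x = o3].
Proof.
by case: x => [[|[|[|[|k]]]] lt_k4]; [constructor 1 | constructor 2 | constructor 3
  | constructor 4 | by []]; apply: ord_inj.
Qed.

(* Either 0, 1, 2 span a triangle, or 01 and 23 are edges and 2 sees neither 0
   nor 1; according to the edges 03 and 13, the latter is an induced 2K2, an
   induced P4 or a triangle 013. *)
Definition obstruction_pattern (F : rel 'I_4) :=
  (F o0 o1 && F o1 o2 && F o0 o2) || [&& F o0 o1, F o2 o3, ~~ F o0 o2 & ~~ F o1 o2].

Section Obstructions.
Variable H : sgraph.
Local Notation V := (vert H).
Local Notation adj := (adj H).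

Definition obstruction (o : {ffun 'I_4 -> V}) :=
  injectiveb o && obstruction_pattern (fun r s => adj (o r) (o s)).

Definition tuple4 (x y z w : V) : {ffun 'I_4 -> V} :=
  [ffun i : 'I_4 => nth x [:: x; y; z; w] i].

Lemma tuple4_injective x y z w : uniq [:: x; y; z; w] -> injectiveb (tuple4 x y z w).
Proof.
move=> uniq_xyzw; apply/injectiveP => i j; rewrite !ffunE => /eqP.
by rewrite nth_uniq // => /eqP /ord_inj.
Qed.

Lemma adj_neq x y : adj x y -> x != y.
Proof. by apply: contraTneq => ->; rewrite adj_irr. Qed.

Section HittingSet.
Variable S : {set V}.
Hypothesis S_hits : forall o, obstruction o -> exists i, o i \in S.

Lemma obstruction_meets_S x y z w : x \notin S -> y \notin S -> z \notin S -> w \notin S ->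
  ~ obstruction (tuple4 x y z w).
Proof.
move=> xS yS zS wS /S_hits [i]; apply/negP.
by case: (ord4P i) => ->; rewrite ffunE.
Qed.

Lemma adj_transfer x y w z : x \notin S -> y \notin S -> w \notin S -> z \notin S ->
  x != y -> ~~ adj x y -> adj x w -> adj y z -> adj y w.
Proof.
move=> xS yS wS zS xy nxy xw yz; apply: contraT => nyw; exfalso.
apply: (obstruction_meets_S xS wS yS zS); apply/andP; split.
  apply: tuple4_injective; rewrite /= !inE !negb_or xy (adj_neq xw) (adj_neq yz) /=.
  rewrite (contraNneq _ nxy) => [|->]; last by rewrite adj_sym.
  rewrite (contraNneq _ nxy) => [|<-] //.
  by rewrite (contraNneq _ nyw) => [|->].
by rewrite /obstruction_pattern !ffunE /= xw yz nxy adj_sym nyw orbT.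
Qed.

Lemma triangle_with_fourth_vertex x y z w :
  x \notin S -> y \notin S -> z \notin S -> w \notin S -> w \notin [:: x; y; z] ->
  adj x y -> adj y z -> adj x z -> False.
Proof.
move=> xS yS zS wS w_xyz xy yz xz; apply: (obstruction_meets_S xS yS zS wS).
apply/andP; split; last by rewrite /obstruction_pattern !ffunE /= xy yz xz.
apply: tuple4_injective; rewrite /= !inE !negb_or (adj_neq xy) (adj_neq yz) (adj_neq xz).
by move: w_xyz; rewrite !inE !negb_or ![_ == w]eq_sym andbT.
Qed.

Section ManyOutside.
Hypothesis many_outside : 3 < #|~: S|.

Lemma triangle_free_outside x y z : x \notin S -> y \notin S -> z \notin S ->
  adj x y -> adj y z -> adj x z -> False.
Proof.
move=> xS yS zS; have [w /andP [wS w_xyz] | none] :=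
  pickP (fun w => (w \notin S) && (w \notin [:: x; y; z])).
  exact: triangle_with_fourth_vertex xS yS zS wS w_xyz.
have : #|~: S| <= #|[:: x; y; z]|.
  apply/subset_leq_card/subsetP => w; rewrite inE => wS.
  by apply: contraFT (none w); rewrite wS.
by move/leq_trans/(_ (card_size _)); rewrite leqNgt many_outside.
Qed.

Lemma ext_biclique_of_edge x0 y0 : x0 \notin S -> y0 \notin S -> adj x0 y0 ->
  dist_ext_biclique_le H #|S|.
Proof.
move=> x0S y0S x0y0; have tri := triangle_free_outside.
pose A := [set z | (z \notin S) && adj y0 z].
pose B := [set z | (z \notin S) && adj x0 z].
have A_or_B x y : x \notin S -> y \notin S -> adj x y -> (x \in A) || (x \in B).
  move=> xS yS xy; rewrite !inE xS /=; case x0x: (adj x0 x); first by rewrite orbT.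
  have [<- | x0_x] := eqVneq x0 x; first by rewrite adj_sym x0y0.
  by rewrite orbF adj_sym (adj_transfer x0S xS y0S yS) ?x0x.
have A_B a b : a \in A -> b \in B -> adj a b.
  rewrite !inE => /andP [aS y0a] /andP [bS x0b]; apply: contraT => nab; exfalso.
  have [ab | a_b] := eqVneq a b; first by subst b; exact: tri x0S y0S aS x0y0 y0a x0b.
  have b_y0 : adj b y0 by apply: adj_transfer aS bS y0S x0S a_b nab _ _; rewrite adj_sym.
  exact: tri x0S bS y0S x0b b_y0 x0y0.
exists S, A, B; split=> //.
- by apply/pred0P => z /=; rewrite !inE; case: (z \in S).
- by apply/pred0P => z /=; rewrite !inE; case: (z \in S).
- apply/pred0P => z /=; rewrite !inE; apply/negP => /andP [/andP [zS y0z] /andP [_ x0z]].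
  exact: tri x0S y0S zS x0y0 y0z x0z.
move=> x y xS yS; apply/idP/idP => [xy | ]; last first.
  by case/orP=> /andP [xAB yAB]; [apply: A_B | rewrite adj_sym; apply: A_B].
have := A_or_B x y xS yS xy; have := A_or_B y x yS xS; rewrite adj_sym xy.
rewrite !inE xS yS /= => /(_ isT) y_AB x_AB.
case/orP: x_AB y_AB => xAB /orP [] yAB; rewrite ?xAB ?yAB ?orbT //; exfalso.
- by apply: (tri _ _ _ y0S xS yS) => //; rewrite adj_sym.
- by apply: (tri _ _ _ x0S xS yS) => //; rewrite adj_sym.
Qed.

End ManyOutside.

Lemma dist_of_hitting_set : dist_ext_biclique_le H (#|S| + 3).
Proof.
have [few | many] := leqP #|~: S| 3.
  exists setT, set0, set0; split; rewrite -?setI_eq0 ?setI0 //.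
    by rewrite cardsT -(cardsC S) leq_add2l.
  by move=> x y; rewrite inE.
have [[x0 y0] /and3P [/= x0S y0S x0y0] | no_edge] :=
  pickP (fun e : V * V => [&& e.1 \notin S, e.2 \notin S & adj e.1 e.2]).
  exact: dist_ext_biclique_le_mono (leq_addr _ _) (ext_biclique_of_edge many x0S y0S x0y0).
exists S, set0, set0; split; rewrite -?setI_eq0 ?setI0 ?leq_addr //.
by move=> x y xS yS; move: (no_edge (x, y)); rewrite /= xS yS !inE => /= ->.
Qed.

End HittingSet.

Definition disjoint_tuples (o o' : {ffun 'I_4 -> V}) := [forall i, forall j, o i != o' j].

Lemma hitting_set_or_packing k :
  (exists2 S : {set V}, #|S| <= 4 * k & forall o, obstruction o -> exists i, o i \in S) \/
  (exists fam, [/\ size fam = k, all obstruction fam & pairwise disjoint_tuples fam]).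
Proof.
elim: k => [|k [[S size_S S_hits] | [fam [size_fam obs_fam disj_fam]]]].
- by right; exists [::].
- by left; exists S => //; lia.
pose cover := flatten [seq codom o | o : {ffun 'I_4 -> V} <- fam].
pose S := [set x : V | x \in cover].
have size_S : #|S| <= 4 * k.
  have <- : size cover = 4 * k.
    rewrite /cover -size_fam; elim: fam {obs_fam disj_fam cover S size_fam} => //= o fam IH.
    by rewrite size_cat IH size_codom card_ord mulnS.
  by apply: leq_trans (card_size _); apply/subset_leq_card/subsetP => x; rewrite inE.
have [o /andP [obs_o /forallP o_out] | S_hits] :=
  pickP (fun o => obstruction o && [forall i, o i \notin S]).
  right; exists (o :: fam); split=> /=; rewrite ?size_fam ?obs_o ?disj_fam ?andbT //.
  apply/allP => o' o'_fam; apply/forallP => i; apply/forallP => j.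
  have : o' j \in S.
    by rewrite inE; apply/flattenP; exists (codom o'); [apply: map_f | apply: codom_f].
  by apply: contraTneq => <-; apply: o_out.
left; exists S => [|o obs_o]; first lia.
move: (S_hits o); rewrite obs_o /=.
by move/negbT; rewrite negb_forall => /existsP [i]; rewrite negbK; exists i.
Qed.

End Obstructions.

Lemma pair_code_lt a b i j : i < a -> j < b -> i * b + j < a * b.
Proof.
move=> lt_ia lt_jb; apply: (@leq_trans (i.+1 * b)).
  by rewrite mulSn addnC ltn_add2r.
by rewrite leq_mul2r lt_ia orbT.
Qed.

Lemma pair_code_inj b i j i' j' :
  j < b -> j' < b -> i * b + j = i' * b + j' -> i = i' /\ j = j'.
Proof.
move=> lt_jb lt_j'b eq_code; have b_gt0 : 0 < b by apply: leq_ltn_trans lt_jb.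
split; [move: (congr1 (divn^~ b) eq_code) | move: (congr1 (modn^~ b) eq_code)].
  by rewrite /= !divnMDl // !divn_small // !addn0.
by rewrite /= !modnMDl !modn_small.
Qed.

Definition table4 (b01 b02 b03 b12 b13 b23 : bool) : rel 'I_4 := fun q q' =>
  match val q, val q' with
  | 0, 1 | 1, 0 => b01 | 0, 2 | 2, 0 => b02 | 0, 3 | 3, 0 => b03
  | 1, 2 | 2, 1 => b12 | 1, 3 | 3, 1 => b13 | 2, 3 | 3, 2 => b23
  | _, _ => false
  end.

Lemma table4E (F : rel 'I_4) : symmetric F -> irreflexive F ->
  F =2 table4 (F o0 o1) (F o0 o2) (F o0 o3) (F o1 o2) (F o1 o3) (F o2 o3).
Proof.
move=> F_sym F_irr q q'.
by case: (ord4P q) => ->; case: (ord4P q') => ->; rewrite /= ?F_irr // F_sym.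
Qed.

(* Explicit enumerations and ordinals: [enum] and [insub] do not reduce under
   [vm_compute]. *)
Definition ord3_enum : seq 'I_3 := [:: @Ordinal 3 0 isT; @Ordinal 3 1 isT; @Ordinal 3 2 isT].
Definition bool_ord4_enum : seq (bool * 'I_4) :=
  [seq (c, q) | c <- [:: false; true], q <- [:: o0; o1; o2; o3]].

(* Copy [q] of the obstruction in the first (resp. second) half of a blown-up
   family goes to part [nth 3 first q] (resp. [nth 3 second q]) of K_{t,t,t};
   the code 3 means deletion. *)
Definition labelling (first second : seq nat) (x : bool * 'I_4) : option 'I_3 :=
  nth None [seq Some a | a <- ord3_enum] (nth 3 (if x.1 then second else first) x.2).

Lemma labelling_quotient (B : rel 'I_4) (first second : seq nat) :
  quotient_mapb (fun x y : bool * 'I_4 => B x.2 y.2) (complete_graph 3)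
    (labelling first second) bool_ord4_enum ord3_enum ->
  quotient_map (fun x y : bool * 'I_4 => B x.2 y.2) (complete_graph 3) (labelling first second).
Proof.
apply: quotient_mapbP => [[c q] | a].
  by apply: allpairs_f; rewrite !inE; [case: c | case: (ord4P q) => ->]; rewrite eqxx ?orbT.
by case: a => [[|[|[|a]]] lt_a3] //; rewrite !inE -!val_eqE.
Qed.

Lemma obstruction_blowup_triangle (F : rel 'I_4) :
  symmetric F -> irreflexive F -> obstruction_pattern F ->
  exists part, quotient_map (fun x y : bool * 'I_4 => F x.2 y.2) (complete_graph 3) part.
Proof.
move=> F_sym F_irr obsF.
pose T := table4 (F o0 o1) (F o0 o2) (F o0 o3) (F o1 o2) (F o1 o3) (F o2 o3).
suff [first [second partQ]] : exists first second,
    quotient_map (fun x y : bool * 'I_4 => T x.2 y.2) (complete_graph 3) (labelling first second).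
  by eexists; apply: eq_quotient_map partQ => x y; rewrite /T -table4E.
move: obsF; rewrite /obstruction_pattern /T.
move: (F o0 o1) (F o0 o2) (F o0 o3) (F o1 o2) (F o1 o3) (F o2 o3) => b01 b02 b03 b12 b13 b23.
case/orP=> [/andP [/andP [-> ->] ->] | /and4P [-> -> /negbTE -> /negbTE ->]].
  exists [:: 0; 1; 2; 3], [::]; apply: labelling_quotient.
  by case: b03; case: b13; case: b23; vm_compute.
case: b03; case: b13.
- by exists [:: 0; 1; 3; 2], [::]; apply: labelling_quotient; vm_compute.
- by exists [:: 1; 2; 2; 0], [::]; apply: labelling_quotient; vm_compute.
- by exists [:: 2; 0; 2; 1], [::]; apply: labelling_quotient; vm_compute.
- by exists [:: 0; 1; 0; 2], [:: 2]; apply: labelling_quotient; vm_compute.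
Qed.

(* [A] is the graph induced by [m] disjoint obstructions, [(l, q)] being copy [q]
   of the [l]-th one; their adjacency pattern is homogeneous: [L] from an earlier
   obstruction to a later one and [F] inside each. *)
Section Homogeneous.
Variables (m t1 t2 : nat) (A : rel ('I_m * 'I_4)) (L F : rel 'I_4).
Hypotheses (A_sym : symmetric A)
  (A_cross : forall (l l' : 'I_m) r s, l < l' -> A (l, r) (l', s) = L r s)
  (A_inner : forall (l : 'I_m) r s, A (l, r) (l, s) = F r s)
  (F_sym : symmetric F) (F_irr : irreflexive F).

Definition hom_adj (p q : nat * 'I_4) :=
  if p.1 < q.1 then L p.2 q.2 else if q.1 < p.1 then L q.2 p.2 else F p.2 q.2.

Lemma A_hom p q : A p q = hom_adj (val p.1, p.2) (val q.1, q.2).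
Proof.
case: p q => [l r] [l' s]; rewrite /hom_adj /=; case: ltngtP => [lt_ll' | lt_l'l | /val_inj <-].
- exact: A_cross.
- by rewrite A_sym A_cross.
- exact: A_inner.
Qed.

Definition clique_quotient := exists psi, quotient_map A (complete_graph t1) psi.
Definition tripartite_quotient := exists psi, quotient_map A (complete_tripartite t2) psi.

Section Embedding.
Variables (P : finType) (v : P -> nat * 'I_4).
Hypotheses (v_lt : forall x, (v x).1 < m) (v_inj : injective v).

Definition embed x : 'I_m * 'I_4 := (Ordinal (v_lt x), (v x).2).

Lemma embed_inj : injective embed.
Proof.
move=> x y [vxy1 vxy2]; apply: v_inj.
by rewrite [v x]surjective_pairing [v y]surjective_pairing vxy1 vxy2.
Qed.

Lemma A_embed x y : A (embed x) (embed y) = hom_adj (v x) (v y).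
Proof. by rewrite A_hom -!surjective_pairing. Qed.

Lemma quotient_of_embedding (G : sgraph) (psi : P -> option (vert G)) :
  quotient_map (fun x y => hom_adj (v x) (v y)) G psi -> exists phi, quotient_map A G phi.
Proof.
move=> psiQ; eexists; apply: quotient_map_induced embed_inj _.
by apply: eq_quotient_map psiQ => x y; rewrite A_embed.
Qed.

End Embedding.

Lemma clique_quotient_of_embedding (K : finType) (k_of : 'I_t1 -> K)
    (v : 'I_t1 * K -> nat * 'I_4) :
  (forall x, (v x).1 < m) -> injective v ->
  (forall i k k', ~~ hom_adj (v (i, k)) (v (i, k'))) ->
  (forall i j, i != j -> exists k k', hom_adj (v (i, k)) (v (j, k'))) ->
  clique_quotient.
Proof.
move=> v_lt v_inj indep edge.
apply: (quotient_of_embedding v_lt v_inj (G := complete_graph t1) (psi := fun x => Some x.1)).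
apply: quotient_map_complete => [i | [i k] [j k'] _ [<-] [->] | i j /edge [k [k' ik_jk']]].
- by exists (i, k_of i).
- exact: indep.
- by exists (i, k), (j, k').
Qed.

Lemma clique_quotient_loop r : t1 <= m -> L r r -> clique_quotient.
Proof.
move=> le_t1m Lrr; apply: (@clique_quotient_of_embedding _ (fun=> tt) (fun x => (val x.1, r))).
- by move=> x; apply: leq_trans (ltn_ord x.1) le_t1m.
- by move=> [i []] [j []] [/val_inj ->].
- by move=> i [] []; rewrite /hom_adj ltnn F_irr.
- move=> i j ij; exists tt, tt; rewrite /hom_adj /=.
  by case: ltngtP => // /val_inj eq_ij; rewrite eq_ij eqxx in ij.
Qed.

Lemma clique_quotient_half_graph r s :
  2 * t1 <= m -> L r s -> ~~ L s r -> (forall q, ~~ L q q) -> clique_quotient.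
Proof.
move=> le_t1m Lrs nLsr nLqq.
apply: (@clique_quotient_of_embedding _ (fun=> true)
  (fun x => (2 * x.1 + x.2, if x.2 then r else s))).
- by move=> [i b] /=; have := ltn_ord i; case: b => /=; lia.
- move=> [i b] [j b'] [eq_ij _]; case: b b' eq_ij => [] [] /= eq_ij; try (exfalso; lia);
    by congr (_, _); apply: ord_inj; lia.
- move=> i [] [] /=; rewrite /hom_adj /= ?ltnn ?F_irr //;
    case: ltngtP; rewrite ?(negbTE nLsr) // => *; exfalso; lia.
- move=> i j ij; case: (ltngtP i j) => [lt_ij | lt_ji | /val_inj eq_ij].
  + by exists true, false; rewrite /hom_adj /=; case: ltngtP => //; lia.
  + by exists false, true; rewrite /hom_adj /=; case: ltngtP => //; lia.
  + by rewrite eq_ij eqxx in ij.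
Qed.

Lemma clique_quotient_cross r s :
  t1 <= m -> r != s -> L r s -> L s r -> ~~ F r s -> clique_quotient.
Proof.
move=> le_t1m rs Lrs Lsr nFrs.
apply: (@clique_quotient_of_embedding _ (fun=> true) (fun x => (val x.1, if x.2 then r else s))).
- by move=> x; apply: leq_trans (ltn_ord x.1) le_t1m.
- move=> [i b] [j b'] [/ord_inj <-]; case: b b' => [] [] // eq_rs.
  + by rewrite eq_rs eqxx in rs.
  + by rewrite eq_rs eqxx in rs.
- by move=> i [] []; rewrite /hom_adj ltnn ?F_irr // F_sym.
- move=> i j ij; exists true, false; rewrite /hom_adj /=.
  by case: ltngtP => // /ord_inj eq_ij; rewrite eq_ij eqxx in ij.
Qed.

Lemma clique_quotient_matching r s : t1.+1 * t1.+1 <= m -> r != s ->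
  ~~ L r s -> ~~ L s r -> F r s -> (forall q, ~~ L q q) -> clique_quotient.
Proof.
move=> le_t1m rs nLrs nLsr Frs nLqq.
(* Vertex [i] collects copy [r] of the obstructions coded [(i, j)], [i <= j], and
   copy [s] of those coded [(j, i)], [j < i]; the classes of [i] and [j] are
   joined by the [F]-edge [rs] of the obstruction coded [(min i j, max i j)]. *)
pose v (x : 'I_t1 * 'I_t1) := if x.1 <= x.2 then (x.1 * t1.+1 + x.2, r) else (x.2 * t1.+1 + x.1, s).
have lt_t1S (i : 'I_t1) : i < t1.+1 by apply: leqW.
have L_rs q q' : q \in [:: r; s] -> q' \in [:: r; s] -> L q q' = false.
  by rewrite !inE => /orP [] /eqP -> /orP [] /eqP ->; apply: negbTE.
have v_rs x : (v x).2 \in [:: r; s] by rewrite /v; case: leqP; rewrite !inE eqxx ?orbT.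
have same_level i k k' : (v (i, k)).1 = (v (i, k')).1 -> k = k'.
  rewrite /v /=; case: leqP => ik; case: leqP => ik' /=;
    by case/pair_code_inj=> // eq1 eq2; apply: ord_inj; lia.
apply: (@clique_quotient_of_embedding _ id v).
- move=> [i j]; rewrite /v; case: (leqP i j) => _ /=.
  + by apply: leq_trans _ le_t1m; apply: pair_code_lt.
  + by apply: leq_trans _ le_t1m; apply: pair_code_lt.
- move=> [i j] [i' j']; rewrite /v /=; case: leqP => ij; case: leqP => ij' [] /pair_code_inj [] //.
  + by move=> /ord_inj -> /ord_inj ->.
  + by move=> _ _ eq_rs; rewrite eq_rs eqxx in rs.
  + by move=> _ _ eq_rs; rewrite eq_rs eqxx in rs.
  + by move=> /ord_inj -> /ord_inj ->.
- move=> i k k'; rewrite /hom_adj; case: ltngtP => [_ | _ | /same_level <-];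
    rewrite ?L_rs ?v_rs ?F_irr //.
- move=> i j ij; exists j, i; rewrite /hom_adj /v /=.
  case: (ltngtP i j) => [_ | _ | /ord_inj eq_ij]; last by rewrite eq_ij eqxx in ij.
  + by rewrite /= ltnn.
  + by rewrite /= ltnn F_sym.
Qed.

Lemma tripartite_quotient_of_blowup (part : bool * 'I_4 -> option 'I_3) :
  2 * t2 <= m -> L =2 F ->
  quotient_map (fun x y : bool * 'I_4 => F x.2 y.2) (complete_graph 3) part ->
  tripartite_quotient.
Proof.
move=> le_t2m LF partQ.
pose v (x : bool * 'I_4 * 'I_t2) := (x.1.1 * t2 + x.2, x.1.2).
have v_lt x : (v x).1 < m by case: x => [[[] q] i] /=; have := ltn_ord i; lia.
have v_inj : injective v.
  move=> [[c q] i] [[c' q'] i'] [eq_level ->].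
  have := ltn_ord i; have := ltn_ord i'.
  by case: c c' eq_level => [] [] /= eq_level *; try (exfalso; lia);
    congr (_, _, _); apply: ord_inj; lia.
apply: (quotient_of_embedding v_lt v_inj (G := complete_tripartite t2)).
apply: eq_quotient_map (quotient_map_tripartite t2 partQ) => x y.
by rewrite /hom_adj /= !LF; case: ifP => // _; case: ifP => // _; rewrite F_sym.
Qed.

Lemma homogeneous_quotient : t1.+1 * t1.+1 <= m -> 2 * t2 <= m ->
  obstruction_pattern F -> clique_quotient \/ tripartite_quotient.
Proof.
move=> le_t1m le_t2m obsF.
have le_t1m' : t1 <= m by nia.
have [r Lrr | nLqq] := pickP (fun r => L r r).
  by left; exact: clique_quotient_loop le_t1m' Lrr.
have [[r s] /andP [/= Lrs nLsr] | L_sym] :=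
  pickP (fun rs : 'I_4 * 'I_4 => L rs.1 rs.2 && ~~ L rs.2 rs.1).
  by left; apply: clique_quotient_half_graph Lrs nLsr _ => [|q]; [nia | rewrite nLqq].
have {}L_sym r s : L r s = L s r.
  by move: (L_sym (r, s)) (L_sym (s, r)) => /=; case: (L r s); case: (L s r).
have [[r s] /and3P [/= rs Lrs nFrs] | LF1] :=
  pickP (fun rs : 'I_4 * 'I_4 => [&& rs.1 != rs.2, L rs.1 rs.2 & ~~ F rs.1 rs.2]).
  by left; apply: (clique_quotient_cross le_t1m' rs Lrs _ nFrs); rewrite L_sym.
have [[r s] /and3P [/= rs nLrs Frs] | LF2] :=
  pickP (fun rs : 'I_4 * 'I_4 => [&& rs.1 != rs.2, ~~ L rs.1 rs.2 & F rs.1 rs.2]).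
  left; apply: (clique_quotient_matching le_t1m rs nLrs _ Frs) => [|q]; last by rewrite nLqq.
  by rewrite L_sym.
have LF : L =2 F.
  move=> r s; have [<- | rs] := eqVneq r s; first by rewrite nLqq F_irr.
  by move: (LF1 (r, s)) (LF2 (r, s)); rewrite /= rs; case: (L r s); case: (F r s).
have [part partQ] := obstruction_blowup_triangle F_sym F_irr obsF.
by right; apply: tripartite_quotient_of_blowup le_t2m LF partQ.
Qed.

End Homogeneous.

Section Packing.
Variable H : sgraph.

(* Colour [r + 4 s] of a pair records the adjacency between copy [r] of the
   earlier tuple and copy [s] of the later one; colour [16 + r + 4 s] records it
   inside the later tuple, so that all tuples but the first share the pattern of
   the second. *)
Definition pattern_colour (k : nat) (o o' : {ffun 'I_4 -> vert H}) : bool :=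
  let r : 'I_4 := inord (k %% 4) in let s : 'I_4 := inord (k %/ 4 %% 4) in
  if k < 16 then adj H (o r) (o' s) else adj H (o' r) (o' s).

Lemma pattern_colour_cross (r s : 'I_4) o o' :
  pattern_colour (r + 4 * s) o o' = adj H (o r) (o' s).
Proof.
have := ltn_ord r; have := ltn_ord s => lt_s4 lt_r4.
rewrite /pattern_colour; have -> : r + 4 * s < 16 by lia.
by congr (adj H (o _) (o' _)); apply: ord_inj; rewrite inordK; lia.
Qed.

Lemma pattern_colour_inner (r s : 'I_4) o o' :
  pattern_colour (16 + r + 4 * s) o o' = adj H (o' r) (o' s).
Proof.
have := ltn_ord r; have := ltn_ord s => lt_s4 lt_r4.
rewrite /pattern_colour; have -> : (16 + r + 4 * s < 16) = false by lia.
by congr (adj H (o' _) (o' _)); apply: ord_inj; rewrite inordK; lia.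
Qed.

Lemma homogeneous_subfamily (fam : seq {ffun 'I_4 -> vert H}) M :
  ramsey_bound 32 M.+1 <= size fam -> exists z0 Z, [/\ subseq (z0 :: Z) fam, M <= size Z,
    forall r s l l', l < l' < size Z ->
      adj H (nth z0 Z l r) (nth z0 Z l' s) = adj H (nth z0 Z 0 r) (nth z0 Z 1 s)
  & forall r s l, l < size Z ->
      adj H (nth z0 Z l r) (nth z0 Z l s) = adj H (nth z0 Z 0 r) (nth z0 Z 0 s)].
Proof.
case/(ramsey_colours pattern_colour) => [[|z0 Z] sub_Z [//= size_Z hom_Z]].
exists z0, Z; split=> // [r s l l' /andP [ll' l'Z] | r s l lZ].
- have colour_lt : r + 4 * s < 32 by have := ltn_ord r; have := ltn_ord s; lia.
  have [b /andP [_ /(pairwiseP z0) hom_rs]] := hom_Z _ colour_lt.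
  have Z_gt1 : 1 < size Z := leq_ltn_trans (leq_ltn_trans (leq0n l) ll') l'Z.
  have := hom_rs 0 1 (ltnW Z_gt1) Z_gt1 isT; have := hom_rs l l' (ltn_trans ll' l'Z) l'Z ll'.
  by rewrite !pattern_colour_cross => /eqP -> /eqP ->.
- have colour_lt : 16 + r + 4 * s < 32 by have := ltn_ord r; have := ltn_ord s; lia.
  have [b /andP [/allP hom_rs _]] := hom_Z _ colour_lt.
  have := hom_rs _ (mem_nth z0 lZ); have := hom_rs _ (mem_nth z0 (leq_ltn_trans (leq0n l) lZ)).
  by rewrite !pattern_colour_inner => /eqP -> /eqP ->.
Qed.

Lemma nth_family_inj (z0 : {ffun 'I_4 -> vert H}) (Z : seq {ffun 'I_4 -> vert H}) :
  all (@obstruction H) Z -> pairwise (@disjoint_tuples H) Z ->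
  injective (fun p : 'I_(size Z) * 'I_4 => nth z0 Z p.1 p.2).
Proof.
move=> obs_Z disj_Z [l r] [l' s] /= eq_rs.
have disj (i j : 'I_(size Z)) a b : i < j -> nth z0 Z i a != nth z0 Z j b.
  move=> ij; have := pairwiseP z0 disj_Z i j (ltn_ord i) (ltn_ord j) ij.
  by move=> /forallP /(_ a) /forallP.
case: (ltngtP l l') => [ll' | l'l | /ord_inj eq_ll'].
- by move: (disj _ _ r s ll'); rewrite eq_rs eqxx.
- by move: (disj _ _ s r l'l); rewrite eq_rs eqxx.
subst l'; have /andP [/injectiveP inj_l _] := allP obs_Z _ (mem_nth z0 (ltn_ord l)).
by rewrite (inj_l _ _ eq_rs).
Qed.

End Packing.

Lemma packing_quotient (C : graph_class) (H : sgraph) t1 t2 (fam : seq {ffun 'I_4 -> vert H}) :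
  projection_closed C -> C H -> 0 < t1 -> 0 < t2 ->
  ramsey_bound 32 (t1.+1 * t1.+1 + 2 * t2).+1 <= size fam ->
  all (@obstruction H) fam -> pairwise (@disjoint_tuples H) fam ->
  C (complete_graph t1) \/ C (complete_tripartite t2).
Proof.
move=> closedC CH t1_gt0 t2_gt0 /homogeneous_subfamily [z0 [Z [sub_Z size_Z cross inner]]].
move=> obs_fam disj_fam.
have obs_Z : all (@obstruction H) Z.
  by apply/allP => o o_Z; apply/(allP obs_fam)/(mem_subseq sub_Z); rewrite inE o_Z orbT.
have disj_Z : pairwise (@disjoint_tuples H) Z.
  by have := subseq_pairwise sub_Z disj_fam; rewrite pairwise_cons => /andP [].
have v_inj := nth_family_inj (z0 := z0) obs_Z disj_Z.
pose v (p : 'I_(size Z) * 'I_4) := nth z0 Z p.1 p.2.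
have le_t1Z : t1.+1 * t1.+1 <= size Z by nia.
have le_t2Z : 2 * t2 <= size Z by nia.
have obs_Z0 : obstruction (nth z0 Z 0) by apply: (allP obs_Z); rewrite mem_nth //; nia.
have A_cross (l l' : 'I_(size Z)) r s :
    l < l' -> adj H (v (l, r)) (v (l', s)) = adj H (nth z0 Z 0 r) (nth z0 Z 1 s).
  by move=> ll'; apply: cross; rewrite ll' ltn_ord.
have A_inner (l : 'I_(size Z)) r s :
    adj H (v (l, r)) (v (l, s)) = adj H (nth z0 Z 0 r) (nth z0 Z 0 s).
  exact: inner.
have [[psi psiQ] | [psi psiQ]] := homogeneous_quotient (A := fun p q => adj H (v p) (v q))
  (fun p q => adj_sym _ _) A_cross A_inner (fun r s => adj_sym _ _) (fun r => adj_irr _)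
  le_t1Z le_t2Z (proj2 (andP obs_Z0)).
- left; apply: (projection_closed_quotient (G := complete_graph t1) (Ordinal t1_gt0) closedC CH).
  exact: (quotient_map_induced (B := adj H) v_inj psiQ).
- right; apply: (projection_closed_quotient (G := complete_tripartite t2) (ord0, Ordinal t2_gt0)
    closedC CH).
  exact: (quotient_map_induced (B := adj H) v_inj psiQ).
Qed.

Theorem theorem1p14 (C : graph_class) :
  projection_closed C ->
  (forall t : nat, 0 < t -> C (complete_graph t)) \/
  (forall t : nat, 0 < t -> C (complete_tripartite t)) \/
  (exists mu : nat, forall H : sgraph, C H -> dist_ext_biclique_le H mu).
Proof.
move=> closedC.
have [[t1 [t1_gt0 notK]] | allK] := classic (exists t, 0 < t /\ ~ C (complete_graph t)); last first.
  by left=> t t_gt0; apply: NNPP => notK; apply: allK; exists t.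
have [[t2 [t2_gt0 notT]] | allT] := classic (exists t, 0 < t /\ ~ C (complete_tripartite t));
  last first.
  by right; left=> t t_gt0; apply: NNPP => notT; apply: allT; exists t.
right; right; pose k := ramsey_bound 32 (t1.+1 * t1.+1 + 2 * t2).+1.
exists (4 * k + 3) => H CH.
have [[S size_S S_hits] | [fam [size_fam obs_fam disj_fam]]] := hitting_set_or_packing H k.
  by apply: dist_ext_biclique_le_mono (dist_of_hitting_set S_hits); rewrite leq_add2r.
have large_fam : k <= size fam by rewrite size_fam.
by case: (packing_quotient closedC CH t1_gt0 t2_gt0 large_fam obs_fam disj_fam) => [/notK | /notT].
Qed.
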